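(* Let $\Lambda=(\Delta,R)$ be a gentle bound quiver. If $\sigma$ is a maximal path in $\Lambda$, then the coextension $[\sigma]\Lambda$ is a gentle bound quiver.
   Context: Paths $\alpha_1\cdots\alpha_l$ ($l\ge1$) satisfy $s\alpha_i=t\alpha_{i+1}$; $t\sigma=t\alpha_1$ and $\alpha_1$ is the terminating arrow of $\sigma$. A bound quiver $(\Delta,R)$ is a finite quiver without isolated vertices with a set $R$ of paths of length $\ge2$ such that for some $n$ every path of length $n$ contains a subpath in $R$. It is gentle if connected and: $R$ consists of paths of length 2; each vertex has at most two outgoing and at most two incoming arrows; for each arrow $\alpha$ there is at most one arrow $\alpha'$ with $s\alpha'=t\alpha$ and $\alpha'\alpha\notin R$, at most one with $t\alpha'=s\alpha$ and $\alpha\alpha'\notin R$, at most one with $s\alpha'=t\alpha$ and $\alpha'\alpha\in R$, and at most one with $t\alpha'=s\alpha$ and $\alpha\alpha'\in R$. A path in $\Lambda$ is a path with no subpath in $R$; it is maximal if not a subpath of a longer path in $\Lambda$. For a maximal path $\sigma$ in $\Lambda$, the coextension $[\sigma]\Lambda=(\Delta',R')$ is defined by: $\Delta'$ is $\Delta$ with a new vertex $x$ and a new arrow $\alpha$ with $s\alpha=t\sigma$, $t\alpha=x$; $R'=R\cup\{\alpha\alpha' : \alpha'\in\Delta_1,\ t\alpha'=t\sigma,\ \alpha'\text{ is not the terminating arrow of }\sigma\}$. *)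

From mathcomp Require Import all_boot.
Set Implicit Arguments. Unset Strict Implicit. Unset Printing Implicit Defensive.

(* A path alpha_1 ... alpha_l (l >= 1) is the sequence
   [:: alpha_1; ...; alpha_l] with s alpha_i = t alpha_(i+1); its terminating
   arrow is alpha_1 and t sigma = t alpha_1. *)

Section Quivers.
Variables (V A : finType) (s t : A -> V).

Definition is_qpath (p : seq A) : bool :=
  (0 < size p) && sorted (fun a b => s a == t b) p.

Variable R : seq A -> Prop.

Definition bound_quiver : Prop :=
  (forall v : V, exists a : A, s a = v \/ t a = v) /\
  (forall p, R p -> is_qpath p /\ 2 <= size p) /\
  (exists n, 1 <= n /\
     forall p, is_qpath p -> size p = n -> exists r, R r /\ infix r p).

Definition qadj : rel V :=
  fun u v => [exists a : A, ((s a == u) && (t a == v)) || ((s a == v) && (t a == u))].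

Definition qconnected : Prop := forall u v : V, connect qadj u v.

Definition at_most_one (P : A -> Prop) : Prop :=
  forall a1 a2, P a1 -> P a2 -> a1 = a2.

Definition gentle : Prop :=
  bound_quiver /\
  qconnected /\
  (forall p, R p -> size p = 2) /\
  (forall v : V, #|[set a | s a == v]| <= 2 /\ #|[set a | t a == v]| <= 2) /\
  (forall al : A,
     at_most_one (fun a' => s a' = t al /\ ~ R [:: a'; al]) /\
     at_most_one (fun a' => t a' = s al /\ ~ R [:: al; a']) /\
     at_most_one (fun a' => s a' = t al /\ R [:: a'; al]) /\
     at_most_one (fun a' => t a' = s al /\ R [:: al; a'])).

Definition path_in (p : seq A) : Prop :=
  is_qpath p /\ forall q, infix q p -> ~ R q.

Definition maximal_path (p : seq A) : Prop :=
  path_in p /\ forall q, path_in q -> infix p q -> size q = size p.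

(* Coextension [sigma]Lambda: vertices option V (None = new vertex x),
   arrows option A (None = new arrow alpha with s alpha = t sigma, t alpha = x). *)
Variable sigma : seq A.

Definition tsigma : option V :=
  if sigma is a :: _ then Some (t a) else None.

Definition coext_s (a : option A) : option V :=
  if a is Some b then Some (s b) else tsigma.

Definition coext_t (a : option A) : option V :=
  if a is Some b then Some (t b) else None.

Definition coext_R (p : seq (option A)) : Prop :=
  (exists r, R r /\ p = map Some r) \/
  (exists a', p = [:: None; Some a'] /\ Some (t a') = tsigma /\ ohead sigma <> Some a').

End Quivers.

From mathcomp Require Import all_boot.
From Stdlib Require Import Classical.

(* Write [s1] for the terminating arrow of [sigma].  Since [sigma] cannot be
   prolonged at its end, every arrow [b] starting at [t sigma] gives a relation
   [b s1]; gentleness at [s1] leaves at most one such [b].  This keeps the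
   out-degree of [t sigma] at most 2 after adding the new arrow, and it rules
   out any clash between the old relations [b c] and the new ones [alpha c].
   The in-degree bound at [t sigma] leaves at most one arrow [c <> s1] ending
   there, i.e. at most one new relation [alpha c]. *)

Definition gentle_arrow {V A : finType} (s t : A -> V) (R : seq A -> Prop)
    (al : A) : Prop :=
  at_most_one (fun a' => s a' = t al /\ ~ R [:: a'; al]) /\
  at_most_one (fun a' => t a' = s al /\ ~ R [:: al; a']) /\
  at_most_one (fun a' => s a' = t al /\ R [:: a'; al]) /\
  at_most_one (fun a' => t a' = s al /\ R [:: al; a']).

Lemma sub_at_most_one {T : finType} {P Q : T -> Prop} :
  at_most_one P -> (forall x, Q x -> P x) -> at_most_one Q.
Proof. by move=> HP QP x y /QP Px /QP Py; apply: HP. Qed.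

Lemma at_most_one_option (T : finType) (P : option T -> Prop) :
  at_most_one (fun x => P (Some x)) -> (P None -> forall x, ~ P (Some x)) ->
  at_most_one P.
Proof.
move=> HS HN [x|] [y|] Px Py //; first by rewrite (HS x y).
- by case: (HN Py x).
- by case: (HN Px y).
Qed.

Lemma card_at_most_one (T : finType) (p : pred T) :
  at_most_one p -> #|[set x | p x]| <= 1.
Proof.
by move=> Hp; apply/card_le1_eqP => x y; rewrite !inE => px py; apply: Hp.
Qed.

Lemma card_set_option (T : finType) (p : pred (option T)) :
  #|[set x | p x]| = p None + #|[set x | p (Some x)]|.
Proof.
rewrite !cardsE !cardE /enum_mem !size_filter.
by rewrite unlock /= count_map; congr (_ + _); rewrite unlock.
Qed.

Lemma infix_map (T U : eqType) (f : T -> U) (r q : seq T) :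
  infix r q -> infix (map f r) (map f q).
Proof.
case/infixP => [x [y ->]]; apply/infixP; exists (map f x), (map f y).
by rewrite !map_cat.
Qed.

Section MaximalPath.
Context {V A : finType} {s t : A -> V} {R : seq A -> Prop}.
Hypothesis R_size2 : forall p, R p -> size p = 2.

Lemma path_in_cons {b s1 : A} {rest : seq A} :
  path_in s t R (s1 :: rest) -> s b = t s1 -> ~ R [:: b; s1] ->
  path_in s t R (b :: s1 :: rest).
Proof.
move=> [/andP [_ Hsorted] Hrel] Hb HnR; split.
  by rewrite /is_qpath /= Hb eqxx.
move=> q; rewrite infix_consl => /orP [Hpre|]; last exact: Hrel.
move=> Rq; have := R_size2 _ Rq; move: Hpre Rq; rewrite prefixE.
by case: q => [|x [|y [|z q]]] //= /eqP [<- <-].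
Qed.

Lemma maximal_path_terminal_rel {s1 : A} {rest : seq A} :
  maximal_path s t R (s1 :: rest) -> forall b, s b = t s1 -> R [:: b; s1].
Proof.
move=> [Hpath Hmax] b Hb; apply: NNPP => HnR.
have := Hmax _ (path_in_cons Hpath Hb HnR) (infix_cons _ _).
by move=> /= /eqP; rewrite eqSS eqn_leq ltnn.
Qed.

End MaximalPath.

Section Coextension.
Context {V A : finType} {s t : A -> V} {R : seq A -> Prop}.
Context {s1 : A} {rest : seq A}.

Local Notation sigma := (s1 :: rest).
Local Notation s' := (coext_s s t sigma).
Local Notation t' := (coext_t t).
Local Notation R' := (coext_R t R sigma).

Lemma coext_R_SomeSome (b c : A) : R' [:: Some b; Some c] <-> R [:: b; c].
Proof.
split; last by move=> Hbc; left; exists [:: b; c].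
case=> [[r [Hr Hm]]|[a' [] //]].
by case: r Hr Hm => [|x [|y [|z r]]] //= Hr [-> ->].
Qed.

Lemma coext_R_NoneSome (c : A) : R' [:: None; Some c] <-> t c = t s1 /\ c <> s1.
Proof.
split.
- case=> [[[|x r] [_ //]]|[a' [[<-] [/= [->] Hne]]]].
  by split => // Ec; apply: Hne; rewrite Ec.
- move=> [Hc Hne]; right; exists c; split => //=; rewrite Hc.
  by split => // -[Ec]; apply: Hne.
Qed.

Lemma coext_notR_None {c : A} : t c = t s1 -> ~ R' [:: None; Some c] -> c = s1.
Proof.
move=> Hc HnR; apply/eqP/negPn/negP => /eqP Hne.
by apply: HnR; apply/coext_R_NoneSome.
Qed.

Lemma coext_is_qpath (q : seq A) :
  is_qpath s t q -> is_qpath s' t' (map Some q).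
Proof. by rewrite /is_qpath size_map sorted_map. Qed.

Lemma coext_sorted_behead {x : option A} {l : seq (option A)} :
  sorted (fun a b => s' a == t' b) (x :: l) ->
  exists2 q, l = map Some q & sorted (fun a b => s a == t b) q.
Proof.
elim: l x => [|[c|] l IH] x /=; [by exists [::]| |by case: x].
case/andP => _ /[dup] Hl /IH [q Elq Hq]; exists (c :: q); first by rewrite Elq.
by move: Hl; rewrite Elq /= path_map.
Qed.

Lemma coext_bound_quiver : bound_quiver s t R -> bound_quiver s' t' R'.
Proof.
move=> [Hiso [HRp [n [Hn Hadm]]]]; split; [|split].
- case=> [v|]; last by exists None; right.
  by case: (Hiso v) => a [H|H]; exists (Some a); [left|right]; rewrite /= H.
- move=> p [[r [Hr ->]]|[a' [-> [/= [Ht] _]]]].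
  + have [Hr_path Hr_size] := HRp r Hr.
    by rewrite size_map; split => //; apply: coext_is_qpath.
  + by rewrite /is_qpath /= Ht eqxx.
- exists n.+1; split => // -[|x l] //= /andP [_ Hp] [Hsz].
  case: (coext_sorted_behead Hp) => q Hl Hq.
  have Hsq : size q = n by rewrite -(size_map Some) -Hl.
  have Hqpath : is_qpath s t q by rewrite /is_qpath Hsq Hn.
  have [r [Hr Hrq]] := Hadm q Hqpath Hsq.
  exists (map Some r); split; first by left; exists r.
  by apply: infix_trans (infix_cons l x); rewrite Hl; apply: infix_map.
Qed.

Lemma coext_connect {u v : V} :
  connect (qadj s t) u v -> connect (qadj s' t') (Some u) (Some v).
Proof.
move=> /connectP [p Hp ->]; apply/connectP.
exists (map Some p); last by rewrite last_map.
rewrite path_map; apply: sub_path Hp => a b /existsP [c Hc].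
by apply/existsP; exists (Some c).
Qed.

Lemma coext_qconnected : qconnected s t -> qconnected s' t'.
Proof.
have tsigma_None : qadj s' t' (Some (t s1)) None.
  by apply/existsP; exists None; rewrite /= ?eqxx.
have None_tsigma : qadj s' t' None (Some (t s1)).
  by apply/existsP; exists None; rewrite /= !eqxx ?orbT.
move=> Hconn [u|] [v|].
- exact: coext_connect.
- exact: connect_trans (coext_connect (Hconn u (t s1))) (connect1 tsigma_None).
- exact: connect_trans (connect1 None_tsigma) (coext_connect (Hconn (t s1) v)).
- exact: connect0.
Qed.

Lemma coext_R_size2 :
  (forall p, R p -> size p = 2) -> forall p, R' p -> size p = 2.
Proof. by move=> HR2 p [[r [Hr ->]]|[a' [-> _]]] //; rewrite size_map HR2. Qed.

Hypothesis degree_le2 :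
  forall v, #|[set a | s a == v]| <= 2 /\ #|[set a | t a == v]| <= 2.
Hypothesis arrows_gentle : forall al, gentle_arrow s t R al.
Hypothesis sigma_terminal_rel : forall b, s b = t s1 -> R [:: b; s1].

Lemma card_out_tsigma : #|[set a | s a == t s1]| <= 1.
Proof.
apply: (@card_at_most_one _ (fun a => s a == t s1)).
move=> b1 b2 /eqP H1 /eqP H2.
by apply: (arrows_gentle s1).2.2.1; split => //; apply: sigma_terminal_rel.
Qed.

Lemma coext_degree_le2 (v : option V) :
  #|[set a | s' a == v]| <= 2 /\ #|[set a | t' a == v]| <= 2.
Proof.
have fiber_Some (f : A -> V) (u : V) :
    [set a | Some (f a) == Some u] = [set a | f a == u].
  by apply: eq_finset => a; rewrite (inj_eq Some_inj).
have fiber_None (f : A -> V) : [set a | Some (f a) == None] = set0.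
  by apply/setP => a; rewrite !inE.
rewrite !card_set_option /=; case: v => [v|].
- rewrite !fiber_Some !eqE /=; have [<-|Hne] := eqVneq (t s1) v; last first.
    by rewrite add0n; apply: degree_le2.
  by rewrite add1n ltnS card_out_tsigma (degree_le2 _).2.
- by rewrite !fiber_None cards0 !eqE.
Qed.

Lemma coext_gentle_arrow_Some (c : A) : gentle_arrow s' t' R' (Some c).
Proof.
have [HnR [HnR' [HR HR']]] := arrows_gentle c.
split; [|split; [|split]]; apply: at_most_one_option.
- apply: (sub_at_most_one HnR) => b [[Hb] HnRb].
  by split => // /coext_R_SomeSome.
- move=> [[Hc] /(coext_notR_None (esym Hc)) Ec] b [[Hb]]; apply.
  apply/coext_R_SomeSome; rewrite Ec.
  by apply: sigma_terminal_rel; rewrite Hb Ec.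
- apply: (sub_at_most_one HnR') => b [[Hb] HnRb].
  by split => // /coext_R_SomeSome.
- by case.
- by apply: (sub_at_most_one HR) => b [[Hb] /coext_R_SomeSome].
- move=> [_ /coext_R_NoneSome [Hc Hne]] b [[Hb] /coext_R_SomeSome Hbc].
  have Hs1 : s b = t s1 by rewrite Hb Hc.
  apply: Hne; apply: (arrows_gentle b).2.2.2; split => //.
  exact: sigma_terminal_rel.
- by apply: (sub_at_most_one HR') => b [[Hb] /coext_R_SomeSome].
- by case.
Qed.

Lemma coext_gentle_arrow_None : gentle_arrow s' t' R' None.
Proof.
split; [|split; [|split]]; try by move=> [?|] [?|] [].
- apply: at_most_one_option => [b1 b2 [[H1] N1] [[H2] N2]|[]] //.
  by rewrite (coext_notR_None H1 N1) (coext_notR_None H2 N2).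
- apply: at_most_one_option => [b1 b2 [[H1] R1] [[H2] R2]|[]] //.
  move/coext_R_NoneSome: R1 => [_ N1]; move/coext_R_NoneSome: R2 => [_ N2].
  apply/eqP/negPn/negP => Hne; have [_] := degree_le2 (t s1).
  rewrite leqNgt => /negP; apply; apply/card_gt2P; exists b1, b2, s1.
  rewrite !inE H1 H2 !eqxx Hne !(eq_sym s1).
  by split => //; split; apply/eqP.
Qed.

End Coextension.

Theorem lemma1p5 (V A : finType) (s t : A -> V) (R : seq A -> Prop)
  (sigma : seq A) :
  gentle s t R -> maximal_path s t R sigma ->
  gentle (coext_s s t sigma) (coext_t t) (coext_R t R sigma).
Proof.
move=> [Hbq [Hconn [HR2 [Hdeg Harrows]]]] Hmax.
case: sigma Hmax => [|s1 rest] Hmax; first by case: Hmax => -[/andP []].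
have Hterm := maximal_path_terminal_rel HR2 Hmax.
split; first exact: coext_bound_quiver Hbq.
split; first exact: coext_qconnected Hconn.
split; first exact: coext_R_size2 HR2.
split; first exact: coext_degree_le2 Hdeg Harrows Hterm.
case=> [c|]; first exact: coext_gentle_arrow_Some Harrows Hterm c.
exact: coext_gentle_arrow_None Hdeg.
Qed.
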